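(* Let $\psi(\bm{x},\bm{y})$ be a quantifier-free Presburger formula with $\bm{x}$ ranging over $\mathbb{Z}^n$ and $\bm{y}$ over $\mathbb{Z}^m$, let $\gamma$ be the sentence $\forall\bm{y}\,\exists\bm{x}\colon\psi(\bm{x},\bm{y})$, and let $\Gamma(\bm{y})$ be the formula $\exists\bm{x}\colon\psi(\bm{x},\bm{y})$. Define the formula $\varphi((x,\bar{\bm{x}}),(y,\bar{\bm{y}}))$, where $x,y$ are single variables and $\bar{\bm{x}},\bar{\bm{y}}$ are vectors of $m$ variables, by $$\varphi\coloneqq (x<0\wedge y<0)\vee(x>0\wedge y>0)\vee(x<0\wedge y=0)\vee(x=0\wedge y>0)\vee(x=0\wedge y=0)\vee(x<0\wedge y>0\wedge\Gamma(\bar{\bm{y}})).$$ Then the relation on $\mathbb{Z}^{1+m}$ defined by $\varphi$ is a well-quasi-ordering if and only if $\gamma$ is true, i.e. $\Gamma(\bm{w})$ holds for every $\bm{w}\in\mathbb{Z}^m$.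
   Context: Presburger formulas are over $\langle\mathbb{Z};+,<,(\equiv_m)_m,0,1\rangle$; quantifier-free formulas are Boolean combinations of linear inequalities and modulo constraints. A well-quasi-ordering on a set $X$ is a reflexive and transitive relation $\le$ on $X$ such that every infinite sequence $x_1,x_2,\ldots\in X$ has $i<j$ with $x_i\le x_j$. *)

From mathcomp Require Import ssreflect ssrbool eqtype ssrnat fintype.
From Stdlib Require Import ZArith.
Set Implicit Arguments.
Unset Strict Implicit.
Open Scope Z_scope.

Inductive pterm (V : Type) : Type :=
  | TVar : V -> pterm V
  | TZero : pterm V
  | TOne : pterm V
  | TAdd : pterm V -> pterm V -> pterm V.

Inductive qf_formula (V : Type) : Type :=
  | FTrue : qf_formula V
  | FLt : pterm V -> pterm V -> qf_formula V
  | FEq : pterm V -> pterm V -> qf_formula V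
  | FCong : positive -> pterm V -> pterm V -> qf_formula V
  | FNot : qf_formula V -> qf_formula V
  | FAnd : qf_formula V -> qf_formula V -> qf_formula V
  | FOr : qf_formula V -> qf_formula V -> qf_formula V.

Fixpoint teval (V : Type) (e : V -> Z) (t : pterm V) : Z :=
  match t with
  | TVar v => e v
  | TZero => 0
  | TOne => 1
  | TAdd t1 t2 => teval e t1 + teval e t2
  end.

Fixpoint holds (V : Type) (e : V -> Z) (f : qf_formula V) : Prop :=
  match f with
  | FTrue => True
  | FLt t1 t2 => teval e t1 < teval e t2
  | FEq t1 t2 => teval e t1 = teval e t2
  | FCong m t1 t2 => (Zpos m | teval e t1 - teval e t2)
  | FNot g => ~ holds e g
  | FAnd g h => holds e g /\ holds e h
  | FOr g h => holds e g \/ holds e h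
  end.

Definition wqo (X : Type) (le : X -> X -> Prop) : Prop :=
  (forall x, le x x) /\
  (forall x y z, le x y -> le y z -> le x z) /\
  (forall f : nat -> X, exists i j : nat, (i < j)%nat /\ le (f i) (f j)).

Definition env (n m : nat) (x : 'I_n -> Z) (y : 'I_m -> Z) : 'I_n + 'I_m -> Z :=
  fun v => match v with inl i => x i | inr j => y j end.

Definition Gamma (n m : nat) (psi : qf_formula ('I_n + 'I_m)) (y : 'I_m -> Z) : Prop :=
  exists x : 'I_n -> Z, holds (env x y) psi.

Definition phi_rel (n m : nat) (psi : qf_formula ('I_n + 'I_m))
    (a b : Z * ('I_m -> Z)) : Prop :=
  let x := fst a in let y := fst b in let ybar := snd b in
  (x < 0 /\ y < 0) \/ (x > 0 /\ y > 0) \/ (x < 0 /\ y = 0) \/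
  (x = 0 /\ y > 0) \/ (x = 0 /\ y = 0) \/ (x < 0 /\ y > 0 /\ Gamma psi ybar).

From mathcomp Require Import ssreflect ssrbool eqtype ssrnat fintype.
From Stdlib Require Import ZArith Lia.

(* Every disjunct of phi forces sgn x <= sgn y, and when Gamma holds everywhere
   every pair with sgn x <= sgn y is covered; so under gamma the relation is the
   preimage of the chain -1 < 0 < 1 under the sign of the first coordinate, a
   wqo since a sequence in a bounded-below subset of Z cannot strictly decrease
   forever.  Conversely (-1, w) <= (0, w) <= (1, w), and transitivity can only
   yield (-1, w) <= (1, w) through the last disjunct, i.e. through Gamma(w). *)

Lemma ascent_of_bounded_below (lo : Z) (g : nat -> Z) :
  (forall i, lo <= g i) -> exists i j : nat, (i < j)%nat /\ g i <= g j.
Proof.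
move=> g_ge.
suff ascent_from k : forall i, Z.to_nat (g i - lo) = k ->
    exists i' j : nat, (i' < j)%nat /\ g i' <= g j by exact: (ascent_from _ 0%nat).
elim/lt_wf_ind: k => k IH i def_k.
case: (Z_le_gt_dec (g i) (g i.+1)) => [le_step | gt_step].
  by exists i, i.+1.
apply: (IH (Z.to_nat (g i.+1 - lo))) => //.
by have := g_ge i.+1; lia.
Qed.

Lemma wqo_sgn_preimage {X : Type} (h : X -> Z) :
  wqo (fun a b : X => Z.sgn (h a) <= Z.sgn (h b)).
Proof.
split; [|split].
- by move=> a; lia.
- by move=> a b c; lia.
- move=> f; apply: (ascent_of_bounded_below (-1)) => i.
  by case: (Z.sgn_spec (h (f i))); lia.
Qed.

Lemma wqo_ext {X : Type} {R S : X -> X -> Prop} :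
  (forall a b, R a b <-> S a b) -> wqo R -> wqo S.
Proof.
move=> RS [R_refl [R_trans R_seq]]; split; [|split].
- by move=> a; apply/RS.
- by move=> a b c /RS ab /RS bc; apply/RS; exact: R_trans ab bc.
- move=> f; have [i [j [lt_ij Rij]]] := R_seq f.
  by exists i, j; split => //; apply/RS.
Qed.

Section PhiRelation.

Variables (n m : nat) (psi : qf_formula ('I_n + 'I_m)).

Lemma phi_rel_sgn_le a b : phi_rel psi a b -> Z.sgn (fst a) <= Z.sgn (fst b).
Proof.
by case: (Z.sgn_spec (fst a)); case: (Z.sgn_spec (fst b)); rewrite /phi_rel; lia.
Qed.

Lemma sgn_le_phi_rel a b :
  (forall w, Gamma psi w) -> Z.sgn (fst a) <= Z.sgn (fst b) -> phi_rel psi a b.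
Proof.
move=> gamma; rewrite /phi_rel.
case: (Z.sgn_spec (fst a)) => [[a_pos ->] | [[<- ->] | [a_neg ->]]];
case: (Z.sgn_spec (fst b)) => [[b_pos ->] | [[<- ->] | [b_neg ->]]]; try lia.
by do 5 right; split; [lia | split; [lia | exact: gamma]].
Qed.

Lemma phi_rel_Gamma w :
  phi_rel psi (-1, w) (1, w) -> Gamma psi w.
Proof.
by rewrite /phi_rel /= => [[|[|[|[|[|[_ [_ //]]]]]]]]; lia.
Qed.

End PhiRelation.

Theorem lemma5p1 (n m : nat) (psi : qf_formula ('I_n + 'I_m)) :
  wqo (phi_rel psi) <-> (forall w : 'I_m -> Z, Gamma psi w).
Proof.
split.
- move=> [_ [phi_trans _]] w; apply: phi_rel_Gamma.
  by apply: (phi_trans _ (0, w)); rewrite /phi_rel /=; lia.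
- move=> gamma; apply: (wqo_ext _ (wqo_sgn_preimage fst)) => a b.
  by split; [exact: sgn_le_phi_rel | exact: phi_rel_sgn_le].
Qed.
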